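(* Let $b,c,d\in\mathbb{R}$ and $Q(\phi)=\phi^4-c\phi^2+2b\phi+2d$. Consider real solutions $\phi$ of the system $\phi'''-6\phi^2\phi'+c\phi'=0$, $\phi''-2\phi^3+c\phi=b$, $(\phi')^2=Q(\phi)$. There exist bounded periodic (nonconstant) solutions of this system if and only if the four roots of $Q$ are real and distinct, which is equivalent to $(b,c)\in\Omega$, where $\Omega=\{(b,c): b\in(-b_c,b_c),\ c>0\}$ and $b_c=\sqrt{2c^3}/\sqrt{27}$. Ordering the four roots of $Q$ as $u_4<u_3<u_2<u_1$, the solution is given by $$\phi(x)=u_4+\frac{(u_2-u_4)(u_3-u_4)}{(u_2-u_4)-(u_2-u_3)\mathrm{sn}^2(\nu x)},$$ where $\nu=\frac12\sqrt{(u_1-u_3)(u_2-u_4)}$ and $\mathrm{sn}$ has modulus $k=\sqrt{\frac{(u_1-u_4)(u_2-u_3)}{(u_1-u_3)(u_2-u_4)}}$. The fundamental period of $\phi$ is $2\nu^{-1}K(k)$, and its minimal and maximal values on $[-\nu^{-1}K,\nu^{-1}K]$ are attained at $\phi(0)=u_3$ and $\phi(\pm\nu^{-1}K)=u_2$, respectively.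
   Context: $K(k)$ denotes the complete elliptic integral of the first kind and $\mathrm{sn}$ the Jacobi elliptic sine function with modulus $k$. *)

From Stdlib Require Import Reals ClassicalEpsilon.
From Coquelicot Require Import Coquelicot.
Open Scope R_scope.

Definition ellF (k phi : R) : R :=
  RInt (fun t => / sqrt (1 - k ^ 2 * sin t ^ 2)) 0 phi.

Definition ellK (k : R) : R := ellF k (PI / 2).

(* Jacobi amplitude: the inverse of phi |-> F(phi,k) (a bijection R -> R
   for 0 <= k < 1), chosen by Hilbert's epsilon. *)
Definition jam (k u : R) : R :=
  epsilon (inhabits 0) (fun phi => ellF k phi = u).

Definition jsn (k u : R) : R := sin (jam k u).

Definition Qpoly (b c d p : R) : R := p ^ 4 - c * p ^ 2 + 2 * b * p + 2 * d.

Definition is_solution (b c d : R) (phi : R -> R) : Prop :=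
  exists phi1 phi2 phi3 : R -> R, forall x : R,
    is_derive phi x (phi1 x) /\ is_derive phi1 x (phi2 x) /\
    is_derive phi2 x (phi3 x) /\
    phi3 x - 6 * phi x ^ 2 * phi1 x + c * phi1 x = 0 /\
    phi2 x - 2 * phi x ^ 3 + c * phi x = b /\
    phi1 x ^ 2 = Qpoly b c d (phi x).

Definition bounded_fun (phi : R -> R) : Prop :=
  exists M : R, forall x : R, Rabs (phi x) <= M.

Definition is_period (phi : R -> R) (T : R) : Prop :=
  0 < T /\ forall x : R, phi (x + T) = phi x.

Definition periodic_fun (phi : R -> R) : Prop := exists T : R, is_period phi T.

Definition nonconstant (phi : R -> R) : Prop := exists x y : R, phi x <> phi y.

Definition fundamental_period (phi : R -> R) (T : R) : Prop :=
  is_period phi T /\ forall T' : R, 0 < T' < T -> ~ is_period phi T'.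

Definition four_ordered_roots (b c d u1 u2 u3 u4 : R) : Prop :=
  u4 < u3 /\ u3 < u2 /\ u2 < u1 /\
  forall p : R, Qpoly b c d p = (p - u1) * (p - u2) * (p - u3) * (p - u4).

Definition four_distinct_real_roots (b c d : R) : Prop :=
  exists u1 u2 u3 u4 : R, four_ordered_roots b c d u1 u2 u3 u4.

Definition b_crit (c : R) : R := sqrt (2 * c ^ 3) / sqrt 27.

Definition in_Omega (b c : R) : Prop :=
  0 < c /\ - b_crit c < b /\ b < b_crit c.

Definition nu_of (u1 u2 u3 u4 : R) : R := / 2 * sqrt ((u1 - u3) * (u2 - u4)).

Definition k_of (u1 u2 u3 u4 : R) : R :=
  sqrt (((u1 - u4) * (u2 - u3)) / ((u1 - u3) * (u2 - u4))).

Definition phi_sol (u1 u2 u3 u4 : R) (x : R) : R :=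
  u4 + ((u2 - u4) * (u3 - u4)) /
       ((u2 - u4) - (u2 - u3) * jsn (k_of u1 u2 u3 u4) (nu_of u1 u2 u3 u4 * x) ^ 2).

(* A solution satisfies phi'' = Q'(phi)/2 and (phi')^2 = Q(phi).  If phi is periodic and
   nonconstant, its minimum m and maximum M are turning points: Q(m) = Q(M) = 0 and Q >= 0 on
   [m, M].  Neither is a double root of Q, because a bounded solution of phi'' = Q'(phi)/2 that
   is at rest at an equilibrium is constant (an energy estimate and Gronwall's lemma).  So
   Q = (p - m)(p - M) g with g a monic quadratic that is negative at m and M, and g supplies the
   two other roots.  Conversely, for roots u4 < u3 < u2 < u1 the substitution th = am(nu x)
   turns the explicit formula into rational identities in sin th, cos th and
   Delta(th) = sqrt(1 - k^2 sin^2 th), and the period comes from am(u + 2K) = am(u) + PI.  Any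
   periodic solution is at rest at u3 at its minimum, as the explicit one is at 0, so by
   uniqueness it is a translate of it.  Finally Q has four distinct real roots for some d iff
   Q'/2 = 2p^3 - cp + b has three distinct real roots, i.e. iff c > 0 and 27 b^2 < 2 c^3. *)

From Stdlib Require Import Reals Lra Psatz ClassicalEpsilon.
From Coquelicot Require Import Coquelicot.
Open Scope R_scope.

(** * Calculus on the real line *)

Lemma is_derive_eq (f : R -> R) (x l l' : R) : is_derive f x l -> l = l' -> is_derive f x l'.
Proof. now intros H <-. Qed.

Lemma continuity_of_is_derive (f f' : R -> R) :
  (forall x, is_derive f x (f' x)) -> continuity f.
Proof.
  intros Hf x. apply derivable_continuous_pt. exists (f' x). now apply is_derive_Reals.
Qed.

Lemma nondecreasing_of_derive_ge0 (f f' : R -> R) :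
  (forall x, is_derive f x (f' x)) -> (forall x, 0 <= f' x) ->
  forall a b, a <= b -> f a <= f b.
Proof.
  intros Hf Hpos a b [Hab | <-]; [|lra].
  destruct (MVT_cor2 f f' a b Hab) as [t [Ht _]].
  - intros t _. now apply is_derive_Reals.
  - specialize (Hpos t). nra.
Qed.

Lemma constant_of_derive_0 (f : R -> R) : (forall x, is_derive f x 0) -> forall x y, f x = f y.
Proof.
  intros Hf x y. destruct (Rtotal_order x y) as [Hxy | [-> | Hxy]]; [| easy |].
  - now apply (eq_is_derive (V := R_NormedModule)).
  - symmetry. now apply (eq_is_derive (V := R_NormedModule)).
Qed.

Lemma Ropp_Rabs_le x : - Rabs x <= x.
Proof. apply (Rabs_le_between x (Rabs x)), Rle_refl. Qed.

Lemma is_derive_shift (f : R -> R) (a x l : R) :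
  is_derive f (x + a) l -> is_derive (fun x => f (x + a)) x l.
Proof.
  intros Hf. eapply is_derive_eq.
  - apply (is_derive_comp f (fun x => x + a)); [exact Hf|]. auto_derive; [easy | reflexivity].
  - change (scal ?u ?v) with (u * v). ring.
Qed.

Lemma exists_root_between (f : R -> R) a b : continuity f -> a <= b -> f a * f b <= 0 ->
  exists z, a <= z <= b /\ f z = 0.
Proof. intros Hf Hab Hsign. destruct (IVT_cor f a b Hf Hab Hsign) as [z Hz]. now exists z. Qed.

Lemma continuous_attains (f : R -> R) a b p : continuity f -> f a <= p <= f b -> exists x, f x = p.
Proof.
  intros Hf Hp.
  assert (Hg : continuity (fun x => f x - p)) by (apply continuity_minus, continuity_const; easy).
  destruct (Rle_or_lt a b) as [Hab | Hab];
    [ destruct (exists_root_between _ a b Hg Hab) as [x [_ Hx]]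
    | destruct (exists_root_between _ b a Hg (Rlt_le _ _ Hab)) as [x [_ Hx]] ];
    try nra; exists x; lra.
Qed.

Lemma derive_0_at_extremum (f f' : R -> R) (x0 : R) : (forall x, is_derive f x (f' x)) ->
  (forall x, f x0 <= f x) \/ (forall x, f x <= f x0) -> f' x0 = 0.
Proof.
  intros Hf Hext.
  assert (pr : derivable_pt f x0) by (exists (f' x0); apply is_derive_Reals, Hf).
  rewrite <- (derive_pt_eq_0 f x0 (f' x0) pr) by apply is_derive_Reals, Hf.
  destruct Hext as [Hmin | Hmax].
  - apply (deriv_minimum f (x0 - 1) (x0 + 1)); [lra | lra | auto].
  - apply (deriv_maximum f (x0 - 1) (x0 + 1)); [lra | lra | auto].
Qed.

(** * Uniqueness for autonomous second-order equations *)

Lemma gronwall_zero (E E' : R -> R) (K x0 : R) :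
  (forall x, is_derive E x (E' x)) -> (forall x, Rabs (E' x) <= K * E x) ->
  E x0 = 0 -> forall x, E x = 0.
Proof.
  intros HE Hbound E0 x.
  (* E(t) e^(K t) is nondecreasing and E(t) e^(-K t) nonincreasing, and both vanish at x0 *)
  assert (Hmono : forall s, s * s = 1 -> forall a b, a <= b ->
            s * E a * exp (s * K * a) <= s * E b * exp (s * K * b)).
  { intros s Hs.
    apply (nondecreasing_of_derive_ge0 _ (fun t => (s * E' t + K * E t) * exp (s * K * t))).
    - intros t. eapply is_derive_eq.
      + apply (is_derive_mult (fun t => s * E t) (fun t => exp (s * K * t))).
        * apply (is_derive_scal E). apply HE.
        * apply (is_derive_comp exp (fun t => s * K * t)); [apply is_derive_exp|].
          auto_derive; [easy | reflexivity].
        * intros; apply Rmult_comm.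
      + change (plus ?u ?v) with (u + v); change (mult ?u ?v) with (u * v).
        change (scal ?u ?v) with (u * v).
        transitivity ((s * E' t + (s * s) * K * E t) * exp (s * K * t)); [ring|].
        rewrite Hs; ring.
    - intros t. pose proof (exp_pos (s * K * t)).
      pose proof (proj1 (Rabs_le_between _ _) (Hbound t)).
      assert (s = 1 \/ s = -1) as [-> | ->] by nra; nra. }
  pose proof (Hmono 1 ltac:(ring)) as Hup. pose proof (Hmono (-1) ltac:(ring)) as Hdown.
  pose proof (exp_pos (1 * K * x)). pose proof (exp_pos (-1 * K * x)).
  destruct (Rle_or_lt x0 x) as [Hx | Hx].
  - specialize (Hup _ _ Hx). specialize (Hdown _ _ Hx). rewrite E0 in Hup, Hdown. nra.
  - specialize (Hup _ _ (Rlt_le _ _ Hx)). specialize (Hdown _ _ (Rlt_le _ _ Hx)).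
    rewrite E0 in Hup, Hdown. nra.
Qed.

Lemma autonomous_ode_unique (F : R -> R) (L M x0 : R) (y y1 z z1 : R -> R) :
  0 <= L -> (forall p q, Rabs p <= M -> Rabs q <= M -> Rabs (F p - F q) <= L * Rabs (p - q)) ->
  (forall x, is_derive y x (y1 x)) -> (forall x, is_derive y1 x (F (y x))) ->
  (forall x, is_derive z x (z1 x)) -> (forall x, is_derive z1 x (F (z x))) ->
  (forall x, Rabs (y x) <= M) -> (forall x, Rabs (z x) <= M) ->
  y x0 = z x0 -> y1 x0 = z1 x0 -> forall x, y x = z x.
Proof.
  intros HL HF Hy Hy1 Hz Hz1 By Bz e0 e1 x.
  set (E := fun t => (y t - z t) ^ 2 + (y1 t - z1 t) ^ 2).
  set (E' := fun t => 2 * (y t - z t) * (y1 t - z1 t) + 2 * (y1 t - z1 t) * (F (y t) - F (z t))).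
  assert (HE : forall t, is_derive E t (E' t)).
  { intros t. unfold E, E'. eapply is_derive_eq.
    - apply (is_derive_plus (fun t => (y t - z t) ^ 2) (fun t => (y1 t - z1 t) ^ 2)).
      + apply (is_derive_pow (fun t => y t - z t)), (is_derive_minus y z); auto.
      + apply (is_derive_pow (fun t => y1 t - z1 t)), (is_derive_minus y1 z1); auto.
    - change (plus ?u ?v) with (u + v); change (minus ?u ?v) with (u - v). simpl. ring. }
  assert (Hbound : forall t, Rabs (E' t) <= (1 + L) * E t).
  { intros t. unfold E, E'.
    set (w := y t - z t). set (v := y1 t - z1 t). set (D := F (y t) - F (z t)).
    assert (HD : Rabs D <= L * Rabs w) by now apply HF.
    assert (Hwv : 2 * Rabs w * Rabs v <= w ^ 2 + v ^ 2).
    { rewrite <- (pow2_abs w), <- (pow2_abs v). pose proof (pow2_ge_0 (Rabs w - Rabs v)). nra. }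
    assert (Hvd : Rabs v * Rabs D <= L * (Rabs w * Rabs v)).
    { pose proof (Rabs_pos v). nra. }
    eapply Rle_trans; [apply Rabs_triang|]. rewrite !Rabs_mult, Rabs_pos_eq by lra.
    pose proof (Rabs_pos w). pose proof (Rabs_pos v). nra. }
  assert (Ex : E x = 0).
  { apply (gronwall_zero E E' (1 + L) x0); auto. unfold E. rewrite e0, e1. ring. }
  unfold E in Ex. pose proof (pow2_ge_0 (y x - z x)). pose proof (pow2_ge_0 (y1 x - z1 x)).
  nra.
Qed.

(** * The incomplete elliptic integral and the Jacobi amplitude *)

(* Jacobi's Delta(th); in the usual notation dn u = Delta (am u). *)
Definition Delta (k t : R) : R := sqrt (1 - k ^ 2 * sin t ^ 2).

Lemma sin_sqr_le_1 t : sin t ^ 2 <= 1.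
Proof. pose proof (sin2_cos2 t). unfold Rsqr in *. nra. Qed.

Lemma cos_sqr t : cos t ^ 2 = 1 - sin t ^ 2.
Proof. pose proof (sin2_cos2 t). unfold Rsqr in *. lra. Qed.

Section Amplitude.
Variable k : R.
Hypothesis Hk : k ^ 2 < 1.

Lemma Delta_radicand_pos t : 0 < 1 - k ^ 2 * sin t ^ 2.
Proof.
  pose proof (sin_sqr_le_1 t). pose proof (pow2_ge_0 k). pose proof (pow2_ge_0 (sin t)). nra.
Qed.

Lemma Delta_pos t : 0 < Delta k t.
Proof. apply sqrt_lt_R0, Delta_radicand_pos. Qed.

Lemma Delta_sqr t : Delta k t ^ 2 = 1 - k ^ 2 * sin t ^ 2.
Proof. apply pow2_sqrt, Rlt_le, Delta_radicand_pos. Qed.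

Lemma Delta_le_1 t : Delta k t <= 1.
Proof.
  rewrite <- sqrt_1. apply sqrt_le_1_alt.
  pose proof (pow2_ge_0 k). pose proof (pow2_ge_0 (sin t)). nra.
Qed.

Lemma inv_Delta_continuous t : continuous (fun t => / Delta k t) t.
Proof.
  apply (ex_derive_continuous (K := R_AbsRing) (V := R_NormedModule)).
  pose proof (Delta_radicand_pos t). unfold Delta.
  auto_derive. split; [lra | split; [|easy]]. apply Rgt_not_eq, sqrt_lt_R0. lra.
Qed.

Lemma ellF_derive x : is_derive (ellF k) x (/ Delta k x).
Proof.
  apply (is_derive_RInt (V := R_CompleteNormedModule) (fun t => / Delta k t) (ellF k) 0 x).
  - apply filter_forall. intros y. apply RInt_correct.
    apply (ex_RInt_continuous (V := R_CompleteNormedModule)). intros; apply inv_Delta_continuous.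
  - apply inv_Delta_continuous.
Qed.

Lemma ellF_0 : ellF k 0 = 0.
Proof. apply (RInt_point (V := R_CompleteNormedModule)). Qed.

(* the integrand is at least 1 *)
Lemma ellF_sub_ge a b : a <= b -> b - a <= ellF k b - ellF k a.
Proof.
  intros Hab.
  enough (ellF k a - a <= ellF k b - b) by lra.
  apply (nondecreasing_of_derive_ge0 (fun t => ellF k t - t) (fun t => / Delta k t - 1)); auto.
  - intros t. apply (is_derive_minus (ellF k) (fun t => t));
      [apply ellF_derive | apply (is_derive_id (K := R_AbsRing))].
  - intros t. pose proof (Delta_pos t). pose proof (Delta_le_1 t).
    enough (1 <= / Delta k t) by lra.
    rewrite <- Rinv_1. apply Rinv_le_contravar; lra.
Qed.

Lemma ellF_lt a b : a < b -> ellF k a < ellF k b.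
Proof. intros Hab. pose proof (ellF_sub_ge a b (Rlt_le _ _ Hab)). lra. Qed.

Lemma ellF_inj a b : ellF k a = ellF k b -> a = b.
Proof.
  intros Heq. destruct (Rtotal_order a b) as [H | [H | H]]; auto;
    apply ellF_lt in H; lra.
Qed.

Lemma ellF_surj u : exists t, ellF k t = u.
Proof.
  pose proof (ellF_sub_ge (- Rabs u) 0). pose proof (ellF_sub_ge 0 (Rabs u)).
  pose proof (Rabs_pos u). pose proof (Rle_abs u). pose proof (Rabs_maj2 u). rewrite ellF_0 in *.
  destruct (exists_root_between (fun t => ellF k t - u) (- Rabs u) (Rabs u)) as [t [_ Ht]].
  - apply continuity_minus, continuity_const; [|easy].
    apply (continuity_of_is_derive _ _ ellF_derive).
  - lra.
  - assert (ellF k (- Rabs u) - u <= 0) by lra. assert (0 <= ellF k (Rabs u) - u) by lra. nra.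
  - exists t. lra.
Qed.

Lemma ellF_affine_invariance (s a : R) :
  (forall t, sin (s * t + a) ^ 2 = sin t ^ 2) ->
  forall t, ellF k (s * t + a) = s * ellF k t + ellF k a.
Proof.
  intros Hsin t.
  assert (Hd : forall t, is_derive (fun t => ellF k (s * t + a) - s * ellF k t) t 0).
  { intros t'. eapply is_derive_eq.
    - apply (is_derive_minus (fun t => ellF k (s * t + a)) (fun t => s * ellF k t)).
      + apply (is_derive_comp (ellF k) (fun t => s * t + a)); [apply ellF_derive|].
        auto_derive; [easy|reflexivity].
      + apply (is_derive_scal (ellF k)), ellF_derive.
    - change (minus ?u ?v) with (u - v); change (scal ?u ?v) with (u * v).
      unfold Delta. rewrite Hsin. ring. }
  pose proof (constant_of_derive_0 _ Hd t 0). simpl in *.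
  rewrite Rmult_0_r, Rplus_0_l, ellF_0 in *. lra.
Qed.

Lemma ellF_add_PI t : ellF k (t + PI) = ellF k t + ellF k PI.
Proof.
  rewrite <- (Rmult_1_l t) at 1. rewrite ellF_affine_invariance, Rmult_1_l; auto.
  intros t'. rewrite Rmult_1_l, neg_sin. ring.
Qed.

Lemma ellF_odd t : ellF k (- t) = - ellF k t.
Proof.
  replace (- t) with (-1 * t + 0) by ring. rewrite ellF_affine_invariance, ellF_0; [ring|].
  intros t'. replace (-1 * t' + 0) with (- t') by ring. rewrite sin_neg. ring.
Qed.

Lemma ellF_PI : ellF k PI = 2 * ellK k.
Proof.
  assert (Hrefl : ellF k (-1 * (PI / 2) + PI) = -1 * ellF k (PI / 2) + ellF k PI).
  { apply ellF_affine_invariance. intros t.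
    replace (-1 * t + PI) with (PI - t) by ring. now rewrite sin_PI_x. }
  unfold ellK. replace (-1 * (PI / 2) + PI) with (PI / 2) in Hrefl by field. lra.
Qed.

Lemma ellK_ge_PI2 : PI / 2 <= ellK k.
Proof.
  pose proof (ellF_sub_ge 0 (PI / 2)). pose proof PI_RGT_0. unfold ellK. rewrite ellF_0 in *. lra.
Qed.

Lemma jam_spec u : ellF k (jam k u) = u.
Proof. apply (epsilon_spec (inhabits 0) (fun t => ellF k t = u)), ellF_surj. Qed.

Lemma jam_eq t u : ellF k t = u -> jam k u = t.
Proof. intros H. apply ellF_inj. now rewrite jam_spec. Qed.

Lemma jam_0 : jam k 0 = 0.
Proof. apply jam_eq, ellF_0. Qed.

Lemma jam_K : jam k (ellK k) = PI / 2.
Proof. now apply jam_eq. Qed.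

Lemma jam_opp u : jam k (- u) = - jam k u.
Proof. apply jam_eq. now rewrite ellF_odd, jam_spec. Qed.

Lemma jam_add_2K u : jam k (u + 2 * ellK k) = jam k u + PI.
Proof. apply jam_eq. now rewrite ellF_add_PI, ellF_PI, jam_spec. Qed.

Lemma jam_2K : jam k (2 * ellK k) = PI.
Proof. apply jam_eq, ellF_PI. Qed.

Lemma jam_lt u v : u < v -> jam k u < jam k v.
Proof.
  intros Huv. destruct (Rlt_or_le (jam k u) (jam k v)) as [H | H]; auto.
  pose proof (ellF_sub_ge _ _ H). rewrite !jam_spec in *. lra.
Qed.

Lemma jam_sub_le u v : u <= v -> jam k v - jam k u <= v - u.
Proof.
  intros Huv. destruct (Rlt_or_le (jam k v) (jam k u)) as [H | H].
  - lra.
  - pose proof (ellF_sub_ge _ _ H). rewrite !jam_spec in *. lra.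
Qed.

Lemma jam_continuous u : continuity_pt (jam k) u.
Proof.
  intros eps Heps. exists eps. split; auto. intros v [_ Hv]. simpl in *. unfold R_dist in *.
  destruct (Rle_or_lt u v) as [Huv | Huv].
  - pose proof (jam_sub_le u v Huv). destruct Huv as [Huv | <-].
    + pose proof (jam_lt u v Huv). rewrite Rabs_pos_eq in *; lra.
    + rewrite Rminus_diag, Rabs_R0. lra.
  - pose proof (jam_sub_le v u (Rlt_le _ _ Huv)). pose proof (jam_lt v u Huv).
    rewrite Rabs_left in *; lra.
Qed.

Lemma jam_derive u : is_derive (jam k) u (Delta k (jam k u)).
Proof.
  apply is_derive_Reals.
  assert (Hdiff : forall t, jam k (u - 1) <= t <= jam k (u + 1) -> derivable_pt (ellF k) t).
  { intros t _. exists (/ Delta k t). apply is_derive_Reals, ellF_derive. }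
  assert (Hin : jam k (u - 1) <= jam k u <= jam k (u + 1)).
  { split; apply Rlt_le, jam_lt; lra. }
  pose proof (Delta_pos (jam k u)).
  replace (Delta k (jam k u)) with (1 / derive_pt (ellF k) (jam k u) (Hdiff _ Hin)).
  - apply (Ranalysis5.derivable_pt_lim_recip_interv (ellF k) (jam k) (u - 1) (u + 1) u);
      try lra.
    + apply jam_continuous.
    + intros v _. apply jam_spec.
    + rewrite (derive_pt_eq_0 _ _ _ _ (proj1 (is_derive_Reals _ _ _) (ellF_derive _))).
      apply Rinv_neq_0_compat. lra.
  - rewrite (derive_pt_eq_0 _ _ _ _ (proj1 (is_derive_Reals _ _ _) (ellF_derive _))).
    field. lra.
Qed.

End Amplitude.

(** * The quartic Q *)

Definition half_dQpoly (b c p : R) : R := 2 * p ^ 3 - c * p + b.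

Lemma Qpoly_derive b c d p : is_derive (Qpoly b c d) p (2 * half_dQpoly b c p).
Proof. unfold Qpoly, half_dQpoly. auto_derive; [easy | ring]. Qed.

Lemma half_dQpoly_of_roots b c d u1 u2 u3 u4 :
  (forall p, Qpoly b c d p = (p - u1) * (p - u2) * (p - u3) * (p - u4)) ->
  forall p, half_dQpoly b c p =
    ((p - u2) * (p - u3) * (p - u4) + (p - u1) * (p - u3) * (p - u4)
     + (p - u1) * (p - u2) * (p - u4) + (p - u1) * (p - u2) * (p - u3)) / 2.
Proof.
  intros HQ p. unfold Qpoly in HQ.
  pose proof (HQ 0). pose proof (HQ 1). pose proof (HQ (-1)). pose proof (HQ 2).
  assert (u1 = - (u2 + u3 + u4)) by nra.
  assert (c = - (u1 * u2 + u1 * u3 + u1 * u4 + u2 * u3 + u2 * u4 + u3 * u4)) by nra.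
  assert (b = - (u1 * u2 * u3 + u1 * u2 * u4 + u1 * u3 * u4 + u2 * u3 * u4) / 2) by nra.
  subst. unfold half_dQpoly. field.
Qed.

Lemma half_dQpoly_lipschitz b c M p q : Rabs p <= M -> Rabs q <= M ->
  Rabs (half_dQpoly b c p - half_dQpoly b c q) <= (6 * M ^ 2 + Rabs c) * Rabs (p - q).
Proof.
  intros Hp Hq.
  replace (half_dQpoly b c p - half_dQpoly b c q) with ((2 * (p ^ 2 + p * q + q ^ 2) - c) * (p - q))
    by (unfold half_dQpoly; ring).
  rewrite Rabs_mult. apply Rmult_le_compat_r; [apply Rabs_pos|].
  apply Rabs_le_between in Hp, Hq. pose proof (proj1 (Rabs_le_between c _) (Rle_refl _)).
  apply Rabs_le_between.
  pose proof (pow2_ge_0 (p + q)). pose proof (pow2_ge_0 (p - q)).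
  assert (p ^ 2 <= M ^ 2) by nra. assert (q ^ 2 <= M ^ 2) by nra. nra.
Qed.

Lemma Rmult_eq_0_r a b : a <> 0 -> a * b = 0 -> b = 0.
Proof. intros Ha Hab. now apply Rmult_integral in Hab as [Hab | Hab]. Qed.

Lemma monic_quadratic_factor a b r s : r <> s ->
  r ^ 2 + a * r + b = 0 -> s ^ 2 + a * s + b = 0 ->
  forall p, p ^ 2 + a * p + b = (p - r) * (p - s).
Proof.
  intros Hrs Hr Hs p.
  assert (Ha : a = - (r + s)).
  { enough (r + s + a = 0) by lra. apply (Rmult_eq_0_r (r - s)); [lra | nra]. }
  assert (Hb : b = r * s) by (subst a; nra).
  subst. ring.
Qed.

Lemma monic_cubic_factor a b c r s t : r <> s -> r <> t -> s <> t ->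
  r ^ 3 + a * r ^ 2 + b * r + c = 0 -> s ^ 3 + a * s ^ 2 + b * s + c = 0 ->
  t ^ 3 + a * t ^ 2 + b * t + c = 0 ->
  forall p, p ^ 3 + a * p ^ 2 + b * p + c = (p - r) * (p - s) * (p - t).
Proof.
  intros Hrs Hrt Hst Hr Hs Ht.
  assert (E : forall p, p ^ 3 + a * p ^ 2 + b * p + c
                        = (p - r) * (p ^ 2 + (a + r) * p + (b + r * (a + r)))).
  { intros p. replace c with (- (r ^ 3 + a * r ^ 2 + b * r)) by lra. ring. }
  assert (Hs' : s ^ 2 + (a + r) * s + (b + r * (a + r)) = 0).
  { apply (Rmult_eq_0_r (s - r)); [lra|]. now rewrite <- E. }
  assert (Ht' : t ^ 2 + (a + r) * t + (b + r * (a + r)) = 0).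
  { apply (Rmult_eq_0_r (t - r)); [lra|]. now rewrite <- E. }
  intros p. rewrite E, (monic_quadratic_factor _ _ s t Hst Hs' Ht' p). ring.
Qed.

Lemma Qpoly_factor_of_roots b c d r1 r2 r3 r4 :
  r1 <> r2 -> r1 <> r3 -> r1 <> r4 -> r2 <> r3 -> r2 <> r4 -> r3 <> r4 ->
  Qpoly b c d r1 = 0 -> Qpoly b c d r2 = 0 -> Qpoly b c d r3 = 0 -> Qpoly b c d r4 = 0 ->
  forall p, Qpoly b c d p = (p - r1) * (p - r2) * (p - r3) * (p - r4).
Proof.
  intros H12 H13 H14 H23 H24 H34 Q1 Q2 Q3 Q4.
  set (C := fun p => p ^ 3 + r1 * p ^ 2 + (r1 ^ 2 - c) * p + (r1 ^ 3 - c * r1 + 2 * b)).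
  assert (E : forall p, Qpoly b c d p = (p - r1) * C p).
  { intros p. unfold Qpoly, C in *.
    replace (2 * d) with (- (r1 ^ 4 - c * r1 ^ 2 + 2 * b * r1)) by lra. ring. }
  assert (HC : forall r, r <> r1 -> Qpoly b c d r = 0 -> C r = 0).
  { intros r Hr Qr. apply (Rmult_eq_0_r (r - r1)); [lra|]. now rewrite <- E. }
  intros p. rewrite E. unfold C.
  rewrite (monic_cubic_factor _ _ _ r2 r3 r4 H23 H24 H34 (HC r2 (not_eq_sym H12) Q2)
             (HC r3 (not_eq_sym H13) Q3) (HC r4 (not_eq_sym H14) Q4) p).
  ring.
Qed.

Lemma Qpoly_rolle b c d x y : x < y -> Qpoly b c d x = 0 -> Qpoly b c d y = 0 ->
  exists z, x < z < y /\ half_dQpoly b c z = 0.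
Proof.
  intros Hxy Qx Qy.
  destruct (MVT_cor2 (Qpoly b c d) (fun p => 2 * half_dQpoly b c p) x y Hxy) as [z [Hz Hzxy]].
  - intros p _. apply is_derive_Reals, Qpoly_derive.
  - exists z. split; [easy|]. rewrite Qx, Qy in Hz.
    apply (Rmult_eq_0_r (2 * (y - x))); [lra | lra].
Qed.

Lemma b_crit_sqr c : 0 < c -> b_crit c ^ 2 = 2 * c ^ 3 / 27 /\ 0 < b_crit c.
Proof.
  intros Hc. unfold b_crit.
  assert (0 < 2 * c ^ 3) by (pose proof (pow_lt c 3 Hc); lra).
  split.
  - unfold Rdiv. rewrite Rpow_mult_distr, pow2_sqrt, pow_inv, pow2_sqrt; lra.
  - apply Rdiv_lt_0_compat; apply sqrt_lt_R0; lra.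
Qed.

(* By Rolle, Q'/2 has three distinct real roots, and its discriminant is 2 c^3 - 27 b^2 up to a
   positive factor. *)
Lemma in_Omega_of_four_roots b c d : four_distinct_real_roots b c d -> in_Omega b c.
Proof.
  intros [u1 [u2 [u3 [u4 [H43 [H32 [H21 HQ]]]]]]].
  assert (Hroot : forall u, u = u1 \/ u = u2 \/ u = u3 \/ u = u4 -> Qpoly b c d u = 0).
  { intros u Hu. rewrite HQ. destruct Hu as [-> | [-> | [-> | ->]]]; ring. }
  destruct (Qpoly_rolle b c d u4 u3) as [x1 [Hx1 E1]]; auto.
  destruct (Qpoly_rolle b c d u3 u2) as [x2 [Hx2 E2]]; auto.
  destruct (Qpoly_rolle b c d u2 u1) as [x3 [Hx3 E3]]; auto.
  unfold half_dQpoly in E1, E2, E3.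
  assert (F := monic_cubic_factor 0 (- c / 2) (b / 2) x1 x2 x3 ltac:(lra) ltac:(lra) ltac:(lra)
    ltac:(lra) ltac:(lra) ltac:(lra)).
  pose proof (F 0). pose proof (F 1). pose proof (F (-1)).
  assert (Ex3 : x3 = - (x1 + x2)) by nra.
  assert (Ec : c = - 2 * (x1 * x2 + x1 * x3 + x2 * x3)) by nra.
  assert (Eb : b = - 2 * (x1 * x2 * x3)) by nra.
  assert (Hdisc : 2 * c ^ 3 - 27 * b ^ 2 = 4 * ((x1 - x2) * (x1 - x3) * (x2 - x3)) ^ 2).
  { rewrite Ec, Eb, Ex3. ring. }
  assert (0 < ((x1 - x2) * (x1 - x3) * (x2 - x3)) ^ 2).
  { apply pow2_gt_0. assert (0 < (x1 - x2) * (x1 - x3)) by nra.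
    assert (x2 - x3 < 0) by lra. nra. }
  assert (Hc : 0 < c).
  { rewrite Ec, Ex3. pose proof (pow2_gt_0 (x2 - x1) ltac:(lra)).
    pose proof (pow2_ge_0 (x1 + x2)). nra. }
  destruct (b_crit_sqr c Hc) as [Hb Hb0].
  split; [easy|]. assert (b ^ 2 < b_crit c ^ 2) by (rewrite Hb; lra). nra.
Qed.

Lemma half_dQpoly_three_roots b c : in_Omega b c ->
  exists x1 x2 x3, x1 < x2 < x3 /\
    half_dQpoly b c x1 = 0 /\ half_dQpoly b c x2 = 0 /\ half_dQpoly b c x3 = 0.
Proof.
  intros [Hc [Hb1 Hb2]]. destruct (b_crit_sqr c Hc) as [Hbc Hbc0].
  assert (Hcont : continuity (half_dQpoly b c)).
  { apply (continuity_of_is_derive _ (fun p => 6 * p ^ 2 - c)). intros p.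
    unfold half_dQpoly. auto_derive; [easy | ring]. }
  (* the cubic has its critical points at -r and r, with values b + b_crit c and b - b_crit c *)
  set (r := sqrt (c / 6)).
  assert (Hr : r ^ 2 = c / 6) by (apply pow2_sqrt; lra).
  assert (Hr0 : 0 < r) by (apply sqrt_lt_R0; lra).
  assert (Hcrit : 2 * c / 3 * r = b_crit c).
  { assert (0 < 2 * c / 3 * r) by (apply Rmult_lt_0_compat; lra).
    assert ((2 * c / 3 * r) ^ 2 = b_crit c ^ 2) by (rewrite Hbc, Rpow_mult_distr, Hr; field).
    nra. }
  assert (Hmr : 0 < half_dQpoly b c (- r)).
  { unfold half_dQpoly.
    replace (2 * (- r) ^ 3 - c * - r + b) with (b + (c - 2 * r ^ 2) * r) by ring.
    rewrite Hr. nra. }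
  assert (Hpr : half_dQpoly b c r < 0).
  { unfold half_dQpoly.
    replace (2 * r ^ 3 - c * r + b) with (b - (c - 2 * r ^ 2) * r) by ring.
    rewrite Hr. nra. }
  set (R0 := 1 + c + Rabs b + r).
  assert (HR0 : 0 < half_dQpoly b c R0 /\ half_dQpoly b c (- R0) < 0).
  { unfold half_dQpoly.
    pose proof (Rabs_pos b). pose proof (Rle_abs b). pose proof (Ropp_Rabs_le b).
    assert (1 + c + Rabs b <= R0) by (unfold R0; lra).
    assert (R0 <= R0 ^ 2) by nra. assert (R0 ^ 3 >= R0 * (1 + c + Rabs b)) by nra. split; nra. }
  assert (r < R0) by (unfold R0; pose proof (Rabs_pos b); lra).
  destruct (exists_root_between _ (- R0) (- r) Hcont) as [x1 [Hx1 E1]]; [lra | nra |].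
  destruct (exists_root_between _ (- r) r Hcont) as [x2 [Hx2 E2]]; [lra | nra |].
  destruct (exists_root_between _ r R0 Hcont) as [x3 [Hx3 E3]]; [lra | nra |].
  exists x1, x2, x3. repeat split; auto.
  - destruct (Req_dec x1 (- r)); [subst; lra|]. destruct (Req_dec x2 (- r)); [subst; lra|]. lra.
  - destruct (Req_dec x2 r); [subst; lra|]. destruct (Req_dec x3 r); [subst; lra|]. lra.
Qed.

Lemma Qpoly_pos_large b c d p : 1 + Rabs c + 2 * Rabs b + 2 * Rabs d <= Rabs p -> 0 < Qpoly b c d p.
Proof.
  intros Hp. set (a := Rabs p) in *.
  assert (Hp2 : p ^ 2 = a ^ 2) by (symmetry; apply pow2_abs).
  assert (Hp4 : p ^ 4 = a ^ 4) by (change 4%nat with (2 * 2)%nat; now rewrite !pow_mult, Hp2).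
  pose proof (Rabs_pos b). pose proof (Rabs_pos c). pose proof (Rabs_pos d).
  assert (c * p ^ 2 <= Rabs c * a ^ 2)
    by (rewrite Hp2; apply Rmult_le_compat_r; [apply pow2_ge_0 | apply Rle_abs]).
  assert (- (Rabs b * a) <= b * p) by (unfold a; rewrite <- Rabs_mult; apply Ropp_Rabs_le).
  pose proof (Ropp_Rabs_le d).
  assert (1 <= a) by lra. assert (a <= a ^ 2) by nra. assert (a ^ 2 <= a ^ 3) by nra.
  assert (a ^ 4 >= a ^ 3 * (1 + Rabs c + 2 * Rabs b + 2 * Rabs d)) by nra.
  unfold Qpoly. nra.
Qed.

(* Q(., d) = Q(., 0) + 2d, and Q(., 0) has local minima at x1, x3 and a local maximum at x2; d
   is chosen so that Q(., d) is negative at x1, x3 and positive at x2. *)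
Lemma four_roots_of_in_Omega b c : in_Omega b c -> exists d, four_distinct_real_roots b c d.
Proof.
  intros HO. destruct (half_dQpoly_three_roots b c HO) as [x1 [x2 [x3 [[H12 H23] [E1 [E2 E3]]]]]].
  assert (Hfac : forall p, half_dQpoly b c p = 2 * ((p - x1) * (p - x2) * (p - x3))).
  { unfold half_dQpoly in *. intros p.
    rewrite <- (monic_cubic_factor 0 (- c / 2) (b / 2) x1 x2 x3); try lra. }
  set (F := Qpoly b c 0).
  assert (Hmvt : forall x y, x < y ->
            exists z, x < z < y /\ F y - F x = 2 * half_dQpoly b c z * (y - x)).
  { intros x y Hxy. destruct (MVT_cor2 F (fun p => 2 * half_dQpoly b c p) x y Hxy) as [z [Hz Hzxy]].
    - intros p _. apply is_derive_Reals, Qpoly_derive.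
    - now exists z. }
  assert (F12 : F x1 < F x2).
  { destruct (Hmvt x1 x2 H12) as [z [Hz E]]. rewrite Hfac in E.
    assert (0 < (z - x2) * (z - x3)) by nra.
    assert (0 < (z - x1) * (z - x2) * (z - x3)) by nra. nra. }
  assert (F23 : F x3 < F x2).
  { destruct (Hmvt x2 x3 H23) as [z [Hz E]]. rewrite Hfac in E.
    assert (0 < (z - x1) * (z - x2)) by nra.
    assert ((z - x1) * (z - x2) * (z - x3) < 0) by nra. nra. }
  set (mx := Rmax (F x1) (F x3)).
  assert (Hmx : F x1 <= mx /\ F x3 <= mx /\ mx < F x2) by (unfold mx, Rmax; destruct Rle_dec; lra).
  set (d := - (F x2 + mx) / 4).
  assert (QF : forall p, Qpoly b c d p = F p + 2 * d) by (intros; unfold F, Qpoly; ring).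
  assert (Q1 : Qpoly b c d x1 < 0) by (rewrite QF; unfold d; lra).
  assert (Q2 : 0 < Qpoly b c d x2) by (rewrite QF; unfold d; lra).
  assert (Q3 : Qpoly b c d x3 < 0) by (rewrite QF; unfold d; lra).
  set (R1 := 1 + Rabs c + 2 * Rabs b + 2 * Rabs d + Rabs x1 + Rabs x3).
  pose proof (Rabs_pos b). pose proof (Rabs_pos c). pose proof (Rabs_pos d).
  pose proof (Rabs_pos x1). pose proof (Rabs_pos x3).
  pose proof (Ropp_Rabs_le x1). pose proof (Rle_abs x3).
  assert (HR1 : 0 < Qpoly b c d R1 /\ 0 < Qpoly b c d (- R1)).
  { split; apply Qpoly_pos_large; rewrite ?Rabs_Ropp, (Rabs_pos_eq R1); unfold R1; lra. }
  pose proof (continuity_of_is_derive _ _ (Qpoly_derive b c d)) as Hcont.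
  destruct (exists_root_between _ (- R1) x1 Hcont) as [z4 [Hz4 Z4]]; [unfold R1; lra | nra |].
  destruct (exists_root_between _ x1 x2 Hcont) as [z3 [Hz3 Z3]]; [lra | nra |].
  destruct (exists_root_between _ x2 x3 Hcont) as [z2 [Hz2 Z2]]; [lra | nra |].
  destruct (exists_root_between _ x3 R1 Hcont) as [z1 [Hz1 Z1]]; [unfold R1; lra | nra |].
  assert (z4 < x1) by (destruct (Req_dec z4 x1); [subst; lra | lra]).
  assert (x1 < z3 < x2) by (destruct (Req_dec z3 x1), (Req_dec z3 x2); subst; lra).
  assert (x2 < z2 < x3) by (destruct (Req_dec z2 x2), (Req_dec z2 x3); subst; lra).
  assert (x3 < z1) by (destruct (Req_dec z1 x3); [subst; lra | lra]).
  exists d, z1, z2, z3, z4. repeat split; try lra.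
  apply Qpoly_factor_of_roots; auto; lra.
Qed.

Lemma monic_quadratic_roots_outside m M s g : m < M ->
  (forall p, m < p < M -> p ^ 2 + s * p + g <= 0) ->
  m ^ 2 + s * m + g <> 0 -> M ^ 2 + s * M + g <> 0 ->
  exists r1 r2, r1 < m /\ M < r2 /\ forall p, p ^ 2 + s * p + g = (p - r1) * (p - r2).
Proof.
  intros HmM Hneg Hm HM.
  set (D := s ^ 2 - 4 * g).
  assert (HD : 0 <= D).
  { pose proof (Hneg ((m + M) / 2) ltac:(lra)). pose proof (pow2_ge_0 ((m + M) / 2 + s / 2)).
    unfold D. nra. }
  set (r1 := (- s - sqrt D) / 2). set (r2 := (- s + sqrt D) / 2).
  assert (Hfac : forall p, p ^ 2 + s * p + g = (p - r1) * (p - r2)).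
  { intros p. unfold r1, r2. replace ((p - (- s - sqrt D) / 2) * (p - (- s + sqrt D) / 2))
      with (p ^ 2 + s * p + (s ^ 2 - sqrt D ^ 2) / 4) by field.
    rewrite pow2_sqrt by easy. unfold D. field. }
  assert (Hr12 : r1 <= r2) by (unfold r1, r2; pose proof (sqrt_pos D); lra).
  exists r1, r2. rewrite Hfac in Hm, HM. split; [|split; [|easy]].
  - destruct (Rlt_or_le r1 m) as [H | [H | <-]];
      [easy | | now rewrite Rminus_diag, Rmult_0_l in Hm].
    set (p := (m + Rmin r1 M) / 2).
    assert (m < p < M /\ p < r1) by (unfold p, Rmin; destruct Rle_dec; lra).
    pose proof (Hneg p ltac:(lra)) as Hp. rewrite Hfac in Hp. nra.
  - destruct (Rlt_or_le M r2) as [H | [H | ->]];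
      [easy | | now rewrite Rminus_diag, Rmult_0_r in HM].
    set (p := (Rmax r2 m + M) / 2).
    assert (m < p < M /\ r2 < p) by (unfold p, Rmax; destruct Rle_dec; lra).
    pose proof (Hneg p ltac:(lra)) as Hp. rewrite Hfac in Hp. nra.
Qed.

Lemma Qpoly_split b c d m M : m <> M -> Qpoly b c d m = 0 -> Qpoly b c d M = 0 ->
  let s := m + M in let g := s ^ 2 - m * M - c in
  (forall p, Qpoly b c d p = (p - m) * (p - M) * (p ^ 2 + s * p + g)) /\
  2 * half_dQpoly b c m = (m - M) * (m ^ 2 + s * m + g) /\
  2 * half_dQpoly b c M = (M - m) * (M ^ 2 + s * M + g).
Proof.
  intros HmM Qm QM s g.
  assert (Hb : b = (c * s - s * (m ^ 2 + M ^ 2)) / 2).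
  { enough (s * (m ^ 2 + M ^ 2) - c * s + 2 * b = 0) by lra.
    apply (Rmult_eq_0_r (m - M)); [lra|]. unfold Qpoly, s in *. nra. }
  unfold half_dQpoly, g, s in *. split; [|split]; [intros p | |]; rewrite Hb; [|field|field].
  unfold Qpoly in *. replace (2 * d) with (- (m ^ 4 - c * m ^ 2 + 2 * b * m)) by lra.
  rewrite Hb. field.
Qed.

(* The cofactor of (p - m)(p - M) in Q is a monic quadratic, nonpositive on (m, M) and nonzero
   at m and M. *)
Lemma four_roots_of_nonneg_arc b c d m M : m < M ->
  Qpoly b c d m = 0 -> Qpoly b c d M = 0 -> (forall p, m <= p <= M -> 0 <= Qpoly b c d p) ->
  half_dQpoly b c m <> 0 -> half_dQpoly b c M <> 0 -> four_distinct_real_roots b c d.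
Proof.
  intros HmM Qm QM Hpos Hm HM.
  destruct (Qpoly_split b c d m M ltac:(lra) Qm QM) as [Hfac [Hdm HdM]].
  set (s := m + M) in *. set (g := s ^ 2 - m * M - c) in *.
  destruct (monic_quadratic_roots_outside m M s g HmM) as [r1 [r2 [Hr1 [Hr2 Hg]]]].
  - intros p Hp. pose proof (Hpos p ltac:(lra)) as Hq. rewrite Hfac in Hq.
    assert ((p - m) * (p - M) < 0) by nra. nra.
  - intros E. rewrite E, Rmult_0_r in Hdm. lra.
  - intros E. rewrite E, Rmult_0_r in HdM. lra.
  - exists r2, M, m, r1. repeat split; try lra.
    intros p. rewrite Hfac, Hg. ring.
Qed.

Lemma nonneg_arc_left_end b c d u1 u2 u3 u4 m M : four_ordered_roots b c d u1 u2 u3 u4 ->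
  m < M -> Qpoly b c d m = 0 -> Qpoly b c d M = 0 ->
  (forall p, m <= p <= M -> 0 <= Qpoly b c d p) -> m = u3.
Proof.
  intros [H43 [H32 [H21 HQ]]] HmM Qm QM Hpos.
  rewrite HQ in Qm, QM.
  assert (Hneg : forall p, (u4 < p < u3 \/ u2 < p < u1) -> m < p < M -> False).
  { intros p Hp HpmM. pose proof (Hpos p ltac:(lra)) as Hq. rewrite HQ in Hq.
    destruct Hp as [Hp | Hp].
    - assert (0 < (p - u1) * (p - u2)) by nra. assert ((p - u3) * (p - u4) < 0) by nra. nra.
    - assert ((p - u1) * (p - u2) < 0) by nra. assert (0 < (p - u3) * (p - u4)) by nra. nra. }
  apply Rmult_integral in Qm as [Qm | Qm]; [apply Rmult_integral in Qm as [Qm | Qm] |];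
    [apply Rmult_integral in Qm as [Qm | Qm] | |].
  - exfalso. assert (0 < (M - u1) * (M - u2) * (M - u3) * (M - u4)).
    { repeat apply Rmult_lt_0_compat; lra. }
    lra.
  - exfalso. apply (Hneg ((u2 + Rmin u1 M) / 2)); unfold Rmin; destruct Rle_dec; lra.
  - lra.
  - exfalso. apply (Hneg ((u4 + Rmin u3 M) / 2)); unfold Rmin; destruct Rle_dec; lra.
Qed.

(** * The explicit solution *)

(* phi_sol x = phi_am (am (nu x)); since am' = nu Delta(am), the derivative of phi_sol at x is
   dphi_am (am (nu x)). *)
Definition phi_am (u2 u3 u4 th : R) : R :=
  u4 + (u2 - u4) * (u3 - u4) / ((u2 - u4) - (u2 - u3) * sin th ^ 2).

Definition dphi_am (u2 u3 u4 nu k th : R) : R :=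
  2 * (u2 - u4) * (u2 - u3) * (u3 - u4) * nu * sin th * cos th * Delta k th
  / ((u2 - u4) - (u2 - u3) * sin th ^ 2) ^ 2.

Section ExplicitSolution.
Variables u1 u2 u3 u4 : R.
Hypotheses (H43 : u4 < u3) (H32 : u3 < u2) (H21 : u2 < u1).

Let k := k_of u1 u2 u3 u4.
Let nu := nu_of u1 u2 u3 u4.
Let den th := (u2 - u4) - (u2 - u3) * sin th ^ 2.

Lemma k_sqr : k ^ 2 = (u1 - u4) * (u2 - u3) / ((u1 - u3) * (u2 - u4)).
Proof.
  unfold k, k_of. rewrite pow2_sqrt; [easy|].
  apply Rmult_le_pos; [nra | apply Rlt_le, Rinv_0_lt_compat; nra].
Qed.

Lemma k_sqr_lt_1 : k ^ 2 < 1.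
Proof.
  rewrite k_sqr. apply Rlt_div_l; [nra|]. nra.
Qed.

Lemma nu_sqr : nu ^ 2 = (u1 - u3) * (u2 - u4) / 4.
Proof.
  unfold nu, nu_of. rewrite Rpow_mult_distr, pow2_sqrt by nra. field.
Qed.

Lemma nu_pos : 0 < nu.
Proof. unfold nu, nu_of. apply Rmult_lt_0_compat; [lra | apply sqrt_lt_R0; nra]. Qed.

Lemma den_ge th : u3 - u4 <= den th.
Proof. pose proof (sin_sqr_le_1 th). unfold den. nra. Qed.

Lemma den_neq_0 th : den th <> 0.
Proof. pose proof (den_ge th). lra. Qed.

Lemma phi_am_sub_u3 th : phi_am u2 u3 u4 th - u3 = (u2 - u3) * (u3 - u4) * sin th ^ 2 / den th.
Proof. pose proof (den_neq_0 th). unfold phi_am, den in *. field. easy. Qed.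

Lemma u2_sub_phi_am th : u2 - phi_am u2 u3 u4 th = (u2 - u4) * (u2 - u3) * cos th ^ 2 / den th.
Proof. pose proof (den_neq_0 th). unfold phi_am, den in *. rewrite cos_sqr. field. easy. Qed.

Lemma phi_am_range th : u3 <= phi_am u2 u3 u4 th <= u2.
Proof.
  pose proof (phi_am_sub_u3 th). pose proof (u2_sub_phi_am th). pose proof (den_ge th).
  assert (0 <= (u2 - u3) * (u3 - u4) * sin th ^ 2 / den th).
  { apply Rdiv_le_0_compat; [apply Rmult_le_pos; [nra | apply pow2_ge_0] | lra]. }
  assert (0 <= (u2 - u4) * (u2 - u3) * cos th ^ 2 / den th).
  { apply Rdiv_le_0_compat; [apply Rmult_le_pos; [nra | apply pow2_ge_0] | lra]. }
  lra.
Qed.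

Lemma phi_am_eq_u3 th : phi_am u2 u3 u4 th = u3 -> sin th = 0.
Proof.
  intros H. pose proof (phi_am_sub_u3 th) as E. rewrite H, Rminus_diag in E.
  pose proof (den_ge th).
  assert (Hs : (u2 - u3) * (u3 - u4) * sin th ^ 2 = 0).
  { apply (Rmult_eq_reg_r (/ den th)); [rewrite Rmult_0_l; lra|].
    apply Rinv_neq_0_compat, den_neq_0. }
  apply Rmult_integral in Hs as [Hs | Hs]; nra.
Qed.

Lemma phi_am_add_PI th : phi_am u2 u3 u4 (th + PI) = phi_am u2 u3 u4 th.
Proof. unfold phi_am. rewrite neg_sin. do 3 f_equal. ring. Qed.

Lemma phi_am_derive th :
  is_derive (phi_am u2 u3 u4) th
    ((u2 - u4) * (u3 - u4) * (2 * (u2 - u3) * sin th * cos th) / den th ^ 2).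
Proof. pose proof (den_neq_0 th). unfold phi_am, den in *. auto_derive; [easy|]. field. easy. Qed.

Lemma dphi_am_derive th :
  is_derive (dphi_am u2 u3 u4 nu k) th
    (2 * (u2 - u4) * (u2 - u3) * (u3 - u4) * nu *
      (((cos th ^ 2 - sin th ^ 2) * Delta k th ^ 2 - k ^ 2 * sin th ^ 2 * cos th ^ 2)
         / (Delta k th * den th ^ 2)
       + 4 * (u2 - u3) * sin th ^ 2 * cos th ^ 2 * Delta k th / den th ^ 3)).
Proof.
  pose proof (den_neq_0 th). pose proof (Delta_radicand_pos k k_sqr_lt_1 th).
  pose proof (Delta_pos k k_sqr_lt_1 th). unfold dphi_am, den, Delta in *.
  auto_derive.
  - repeat split; auto; lra.
  - replace (1 + - (k * (k * 1) * (sin th * (sin th * 1)))) with (1 - k ^ 2 * sin th ^ 2) by ring.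
    field. lra.
Qed.

Lemma dphi_am_sqr th :
  let phi := phi_am u2 u3 u4 th in
  dphi_am u2 u3 u4 nu k th ^ 2 = (phi - u1) * (phi - u2) * (phi - u3) * (phi - u4).
Proof.
  pose proof (den_neq_0 th). unfold dphi_am, phi_am. fold (den th).
  replace
    ((2 * (u2 - u4) * (u2 - u3) * (u3 - u4) * nu * sin th * cos th * Delta k th / den th ^ 2) ^ 2)
    with (4 * ((u2 - u4) * (u2 - u3) * (u3 - u4)) ^ 2 * nu ^ 2 * sin th ^ 2 * cos th ^ 2
          * Delta k th ^ 2 / den th ^ 4) by (field; easy).
  rewrite Delta_sqr, cos_sqr, nu_sqr, k_sqr by apply k_sqr_lt_1. unfold den in *.
  field. repeat split; try easy; nra.
Qed.

Lemma ddphi_am_identity th :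
  let phi := phi_am u2 u3 u4 th in
  2 * (u2 - u4) * (u2 - u3) * (u3 - u4) * nu *
    (((cos th ^ 2 - sin th ^ 2) * Delta k th ^ 2 - k ^ 2 * sin th ^ 2 * cos th ^ 2)
       / (Delta k th * den th ^ 2)
     + 4 * (u2 - u3) * sin th ^ 2 * cos th ^ 2 * Delta k th / den th ^ 3) * (nu * Delta k th)
  = ((phi - u2) * (phi - u3) * (phi - u4) + (phi - u1) * (phi - u3) * (phi - u4)
     + (phi - u1) * (phi - u2) * (phi - u4) + (phi - u1) * (phi - u2) * (phi - u3)) / 2.
Proof.
  pose proof (den_neq_0 th). pose proof (Delta_pos k k_sqr_lt_1 th). unfold phi_am. fold (den th).
  match goal with |- ?L = _ => replace L with
   (2 * (u2 - u4) * (u2 - u3) * (u3 - u4) * nu ^ 2 *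
    (((cos th ^ 2 - sin th ^ 2) * Delta k th ^ 2 - k ^ 2 * sin th ^ 2 * cos th ^ 2) / den th ^ 2
     + 4 * (u2 - u3) * sin th ^ 2 * cos th ^ 2 * Delta k th ^ 2 / den th ^ 3)) by (field; lra) end.
  rewrite Delta_sqr, cos_sqr, nu_sqr, k_sqr by apply k_sqr_lt_1. unfold den in *.
  field. repeat split; try easy; nra.
Qed.

Lemma am_derive x : is_derive (fun x => jam k (nu * x)) x (nu * Delta k (jam k (nu * x))).
Proof.
  eapply is_derive_eq.
  - apply (is_derive_comp (jam k) (fun x => nu * x)); [apply jam_derive, k_sqr_lt_1|].
    auto_derive; [easy | reflexivity].
  - change (scal ?u ?v) with (u * v). ring.
Qed.

Lemma phi_sol_derive x :
  is_derive (phi_sol u1 u2 u3 u4) x (dphi_am u2 u3 u4 nu k (jam k (nu * x))).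
Proof.
  eapply is_derive_eq.
  - apply (is_derive_comp (phi_am u2 u3 u4) (fun x => jam k (nu * x))).
    + apply phi_am_derive.
    + apply am_derive.
  - change (scal ?u ?v) with (u * v). pose proof (den_neq_0 (jam k (nu * x))).
    unfold dphi_am, den in *. field. easy.
Qed.

Lemma phi_sol_solution b c d :
  (forall p, Qpoly b c d p = (p - u1) * (p - u2) * (p - u3) * (p - u4)) ->
  is_solution b c d (phi_sol u1 u2 u3 u4).
Proof.
  intros HQ. set (phi := phi_sol u1 u2 u3 u4).
  set (phi1 := fun x => dphi_am u2 u3 u4 nu k (jam k (nu * x))).
  assert (Hd2 : forall x, is_derive phi1 x (half_dQpoly b c (phi x))).
  { intros x. eapply is_derive_eq.
    - apply (is_derive_comp (dphi_am u2 u3 u4 nu k) (fun x => jam k (nu * x))).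
      + apply dphi_am_derive.
      + apply am_derive.
    - change (scal ?u ?v) with (u * v). rewrite Rmult_comm, ddphi_am_identity.
      symmetry. apply (half_dQpoly_of_roots b c d); auto. }
  exists phi1, (fun x => half_dQpoly b c (phi x)), (fun x => (6 * phi x ^ 2 - c) * phi1 x).
  intros x. split; [apply phi_sol_derive|]. split; [apply Hd2|]. split.
  - eapply is_derive_eq.
    + apply (is_derive_comp (half_dQpoly b c) phi); [|apply phi_sol_derive].
      unfold half_dQpoly. auto_derive; easy.
    + change (scal ?u ?v) with (u * v). unfold phi1. ring.
  - unfold half_dQpoly. split; [ring | split; [ring|]].
    rewrite HQ. apply dphi_am_sqr.
Qed.

Lemma phi_sol_range x : u3 <= phi_sol u1 u2 u3 u4 x <= u2.
Proof. apply phi_am_range. Qed.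

Lemma phi_sol_0 : phi_sol u1 u2 u3 u4 0 = u3.
Proof.
  change (phi_am u2 u3 u4 (jam k (nu * 0)) = u3).
  rewrite Rmult_0_r, jam_0 by apply k_sqr_lt_1. unfold phi_am. rewrite sin_0. field. lra.
Qed.

Lemma phi_sol_at_K :
  phi_sol u1 u2 u3 u4 (ellK k / nu) = u2 /\ phi_sol u1 u2 u3 u4 (- (ellK k / nu)) = u2.
Proof.
  assert (Hu2 : forall th, sin th ^ 2 = 1 -> phi_am u2 u3 u4 th = u2).
  { intros th Hs. unfold phi_am. rewrite Hs. field. lra. }
  pose proof nu_pos. pose proof k_sqr_lt_1. split; apply Hu2.
  - change (sin (jam k (nu * (ellK k / nu))) ^ 2 = 1).
    replace (nu * (ellK k / nu)) with (ellK k) by (field; lra).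
    rewrite jam_K, sin_PI2 by easy. ring.
  - change (sin (jam k (nu * - (ellK k / nu))) ^ 2 = 1).
    replace (nu * - (ellK k / nu)) with (- ellK k) by (field; lra).
    rewrite jam_opp, jam_K, sin_neg, sin_PI2 by easy. ring.
Qed.

Lemma phi_sol_period : is_period (phi_sol u1 u2 u3 u4) (2 * ellK k / nu).
Proof.
  pose proof nu_pos. pose proof (ellK_ge_PI2 k k_sqr_lt_1). pose proof PI_RGT_0. split.
  - apply Rdiv_lt_0_compat; lra.
  - intros x. change (phi_am u2 u3 u4 (jam k (nu * (x + 2 * ellK k / nu)))
                      = phi_am u2 u3 u4 (jam k (nu * x))).
    replace (nu * (x + 2 * ellK k / nu)) with (nu * x + 2 * ellK k) by (field; lra).
    rewrite jam_add_2K by apply k_sqr_lt_1. apply phi_am_add_PI.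
Qed.

(* A shorter period T would give phi T = phi 0 = u3, i.e. sin (am (nu T)) = 0, although
   0 < am (nu T) < PI. *)
Lemma phi_sol_fundamental_period : fundamental_period (phi_sol u1 u2 u3 u4) (2 * ellK k / nu).
Proof.
  split; [apply phi_sol_period|]. intros T [HT0 HT] [_ Hper].
  pose proof nu_pos as Hnu. pose proof k_sqr_lt_1 as Hk.
  specialize (Hper 0). rewrite Rplus_0_l, phi_sol_0 in Hper. apply phi_am_eq_u3 in Hper.
  assert (HT0' : 0 < nu * T) by nra.
  assert (H2K : nu * T < 2 * ellK k).
  { apply (Rmult_lt_compat_l nu) in HT; [|easy].
    now replace (nu * (2 * ellK k / nu)) with (2 * ellK k) in HT by (field; lra). }
  apply (jam_lt k) in HT0', H2K; [|easy|easy].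
  rewrite jam_0 in HT0' by easy. rewrite jam_2K in H2K by easy.
  pose proof (sin_gt_0 _ HT0' H2K). change (sin (jam k (nu * T)) = 0) in Hper. lra.
Qed.

Lemma phi_sol_bounded : bounded_fun (phi_sol u1 u2 u3 u4).
Proof.
  exists (Rabs u2 + Rabs u3). intros x. pose proof (phi_sol_range x).
  apply Rabs_le_between. split.
  - pose proof (Rabs_maj2 u3). pose proof (Rabs_pos u2). lra.
  - pose proof (Rle_abs u2). pose proof (Rabs_pos u3). lra.
Qed.

Lemma phi_sol_nonconstant : nonconstant (phi_sol u1 u2 u3 u4).
Proof.
  exists 0, (ellK k / nu). rewrite phi_sol_0, (proj1 phi_sol_at_K). lra.
Qed.

End ExplicitSolution.

(** * Bounded periodic solutions *)

Lemma is_period_nat (f : R -> R) T : is_period f T -> forall n x, f (x + INR n * T) = f x.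
Proof.
  intros [_ HT] n. induction n as [|n IH]; intros x; [simpl; f_equal; ring|].
  rewrite S_INR. replace (x + (INR n + 1) * T) with (x + INR n * T + T) by ring.
  now rewrite HT.
Qed.

Lemma is_period_reduce (f : R -> R) T : is_period f T ->
  forall x, exists x', 0 <= x' <= T /\ f x = f x'.
Proof.
  intros Hper. pose proof Hper as [HT0 HT].
  assert (Hnat : forall n y, 0 <= y <= INR n * T -> exists x', 0 <= x' <= T /\ f y = f x').
  { induction n as [|n IH]; intros y Hy.
    - simpl in Hy. exists y. split; [lra | easy].
    - destruct (Rle_or_lt y T) as [HyT | HyT]; [exists y; split; [lra | easy]|].
      rewrite S_INR in Hy. destruct (IH (y - T)) as [x' [Hx' Hfx']]; [lra|].
      exists x'. split; [easy|]. rewrite <- Hfx', <- (HT (y - T)). f_equal. ring. }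
  intros x. destruct (INR_unbounded (Rabs x / T)) as [n Hn].
  assert (Hx : Rabs x < INR n * T) by (apply Rlt_div_l; lra).
  pose proof (Rle_abs x). pose proof (Ropp_Rabs_le x).
  destruct (Hnat (n + n)%nat (x + INR n * T)) as [x' [Hx' Hfx']]; [rewrite plus_INR; nra|].
  exists x'. split; [easy|]. now rewrite <- Hfx', (is_period_nat f T Hper).
Qed.

Lemma periodic_continuous_extrema (f : R -> R) : continuity f -> periodic_fun f ->
  exists xm xM, forall x, f xm <= f x <= f xM.
Proof.
  intros Hf [T HT]. pose proof (is_period_reduce f T HT) as Hred. destruct HT as [HT0 _].
  destruct (continuity_ab_min f 0 T ltac:(lra) (fun x _ => Hf x)) as [xm [Hm _]].
  destruct (continuity_ab_maj f 0 T ltac:(lra) (fun x _ => Hf x)) as [xM [HM _]].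
  exists xm, xM. intros x. destruct (Hred x) as [x' [Hx' ->]]. auto.
Qed.

Lemma is_solution_reduce b c d psi : is_solution b c d psi -> exists psi1 : R -> R,
  (forall x, is_derive psi x (psi1 x)) /\
  (forall x, is_derive psi1 x (half_dQpoly b c (psi x))) /\
  (forall x, psi1 x ^ 2 = Qpoly b c d (psi x)).
Proof.
  intros [psi1 [psi2 [psi3 Hs]]]. exists psi1.
  split; [|split]; intros x; destruct (Hs x) as (H1 & H2 & _ & _ & H5 & H6); auto.
  eapply is_derive_eq; [exact H2|]. unfold half_dQpoly. lra.
Qed.

Lemma half_dQpoly_ode_unique b c (M x0 : R) (y y1 z z1 : R -> R) :
  (forall x, is_derive y x (y1 x)) -> (forall x, is_derive y1 x (half_dQpoly b c (y x))) ->
  (forall x, is_derive z x (z1 x)) -> (forall x, is_derive z1 x (half_dQpoly b c (z x))) ->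
  (forall x, Rabs (y x) <= M) -> (forall x, Rabs (z x) <= M) ->
  y x0 = z x0 -> y1 x0 = z1 x0 -> forall x, y x = z x.
Proof.
  apply (autonomous_ode_unique (half_dQpoly b c) (6 * M ^ 2 + Rabs c)).
  - pose proof (pow2_ge_0 M). pose proof (Rabs_pos c). lra.
  - intros p q. apply half_dQpoly_lipschitz.
Qed.

Section Oscillation.
Variables (b c d : R) (psi psi1 : R -> R) (xm xM : R).
Hypotheses (Hpsi : forall x, is_derive psi x (psi1 x))
  (Hpsi1 : forall x, is_derive psi1 x (half_dQpoly b c (psi x)))
  (Henergy : forall x, psi1 x ^ 2 = Qpoly b c d (psi x))
  (Hbounded : bounded_fun psi) (Hnonconstant : nonconstant psi)
  (Hext : forall x, psi xm <= psi x <= psi xM).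

Lemma psi_min_lt_max : psi xm < psi xM.
Proof.
  destruct Hnonconstant as [x [y Hxy]]. destruct (Hext x), (Hext y).
  destruct (Req_dec (psi xm) (psi xM)); [exfalso; apply Hxy|]; lra.
Qed.

Lemma psi1_at_min : psi1 xm = 0.
Proof. apply (derive_0_at_extremum psi); [easy | left; apply Hext]. Qed.

Lemma psi1_at_max : psi1 xM = 0.
Proof. apply (derive_0_at_extremum psi); [easy | right; apply Hext]. Qed.

Lemma Qpoly_at_turning_point x0 : psi1 x0 = 0 -> Qpoly b c d (psi x0) = 0.
Proof. intros H. rewrite <- Henergy, H. ring. Qed.

Lemma Qpoly_nonneg_on_range p : psi xm <= p <= psi xM -> 0 <= Qpoly b c d p.
Proof.
  intros Hp. destruct (continuous_attains psi xm xM p (continuity_of_is_derive _ _ Hpsi) Hp)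
    as [x <-].
  rewrite <- Henergy. apply pow2_ge_0.
Qed.

(* a turning point at an equilibrium would make psi constant *)
Lemma half_dQpoly_at_turning_point x0 : psi1 x0 = 0 -> half_dQpoly b c (psi x0) <> 0.
Proof.
  intros H1 H2. destruct Hbounded as [Mb HMb]. destruct Hnonconstant as [x [y Hxy]].
  assert (Hconst : forall x, psi x = psi x0).
  { apply (half_dQpoly_ode_unique b c Mb x0 psi psi1 (fun _ => psi x0) (fun _ => 0)); auto.
    - intros t. auto_derive; [easy | reflexivity].
    - intros t. rewrite H2. auto_derive; [easy | reflexivity]. }
  apply Hxy. now rewrite !Hconst.
Qed.

Lemma oscillation_four_roots : four_distinct_real_roots b c d.
Proof.
  apply (four_roots_of_nonneg_arc b c d (psi xm) (psi xM)).
  - apply psi_min_lt_max.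
  - apply Qpoly_at_turning_point, psi1_at_min.
  - apply Qpoly_at_turning_point, psi1_at_max.
  - apply Qpoly_nonneg_on_range.
  - apply half_dQpoly_at_turning_point, psi1_at_min.
  - apply half_dQpoly_at_turning_point, psi1_at_max.
Qed.

(* both psi and the explicit solution start from the turning point u3 with zero velocity *)
Lemma oscillation_translate u1 u2 u3 u4 : four_ordered_roots b c d u1 u2 u3 u4 ->
  forall x, psi x = phi_sol u1 u2 u3 u4 (x + - xm).
Proof.
  intros H4. pose proof H4 as (H43 & H32 & H21 & HQ).
  assert (Hm : psi xm = u3).
  { apply (nonneg_arc_left_end b c d u1 u2 u3 u4 (psi xm) (psi xM) H4).
    - apply psi_min_lt_max.
    - apply Qpoly_at_turning_point, psi1_at_min.
    - apply Qpoly_at_turning_point, psi1_at_max.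
    - apply Qpoly_nonneg_on_range. }
  set (phi := phi_sol u1 u2 u3 u4).
  assert (Hsol : is_solution b c d phi) by now apply phi_sol_solution.
  destruct (is_solution_reduce b c d phi Hsol) as [phi1 [Hphi [Hphi1 _]]].
  assert (Hphi1_0 : phi1 0 = 0).
  { apply (derive_0_at_extremum phi); [easy | left]. intros x.
    unfold phi. rewrite phi_sol_0 by easy. apply phi_sol_range; easy. }
  assert (Hphi_bounded : bounded_fun phi) by now apply phi_sol_bounded.
  destruct Hbounded as [Mb HMb]. destruct Hphi_bounded as [Mp HMp].
  apply (half_dQpoly_ode_unique b c (Rmax Mb Mp) xm psi psi1
           (fun x => phi (x + - xm)) (fun x => phi1 (x + - xm))); auto.
  - intros x. now apply is_derive_shift.
  - intros x. now apply is_derive_shift.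
  - intros x. eapply Rle_trans; [apply HMb | apply Rmax_l].
  - intros x. eapply Rle_trans; [apply HMp | apply Rmax_r].
  - rewrite Rplus_opp_r, Hm. unfold phi. now rewrite phi_sol_0.
  - rewrite Rplus_opp_r, Hphi1_0. apply psi1_at_min.
Qed.

End Oscillation.

Lemma periodic_solution_oscillates b c d psi : is_solution b c d psi -> periodic_fun psi ->
  exists psi1 xm xM,
    (forall x, is_derive psi x (psi1 x)) /\
    (forall x, is_derive psi1 x (half_dQpoly b c (psi x))) /\
    (forall x, psi1 x ^ 2 = Qpoly b c d (psi x)) /\ (forall x, psi xm <= psi x <= psi xM).
Proof.
  intros Hs Hper. destruct (is_solution_reduce b c d psi Hs) as [psi1 [H1 [H2 H3]]].
  destruct (periodic_continuous_extrema psi (continuity_of_is_derive _ _ H1) Hper)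
    as [xm [xM Hext]].
  now exists psi1, xm, xM.
Qed.

Theorem lemma1 (b c d : R) :
  ((exists phi : R -> R,
      is_solution b c d phi /\ bounded_fun phi /\ periodic_fun phi /\ nonconstant phi)
     <-> four_distinct_real_roots b c d)
  /\ ((exists d' : R, four_distinct_real_roots b c d') <-> in_Omega b c)
  /\ (forall u1 u2 u3 u4 : R, four_ordered_roots b c d u1 u2 u3 u4 ->
       let nu := nu_of u1 u2 u3 u4 in
       let k := k_of u1 u2 u3 u4 in
       let phi := phi_sol u1 u2 u3 u4 in
       let L := ellK k / nu in
       is_solution b c d phi /\ bounded_fun phi /\ nonconstant phi /\
       fundamental_period phi (2 * ellK k / nu) /\
       phi 0 = u3 /\ phi L = u2 /\ phi (- L) = u2 /\
       (forall x : R, - L <= x <= L -> u3 <= phi x <= u2) /\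
       (forall psi : R -> R,
          is_solution b c d psi -> bounded_fun psi -> periodic_fun psi ->
          nonconstant psi -> exists x0 : R, forall x : R, psi x = phi (x + x0))).
Proof.
  split; [split | split; [split |]].
  - intros [psi (Hs & Hb & Hper & Hnc)].
    destruct (periodic_solution_oscillates b c d psi Hs Hper)
      as (psi1 & xm & xM & H1 & H2 & H3 & Hext).
    now apply (oscillation_four_roots b c d psi psi1 xm xM).
  - intros (u1 & u2 & u3 & u4 & H43 & H32 & H21 & HQ). exists (phi_sol u1 u2 u3 u4).
    split; [now apply phi_sol_solution|]. split; [now apply phi_sol_bounded|].
    split; [eexists; now apply phi_sol_period | now apply phi_sol_nonconstant].
  - intros [d' H]. now apply (in_Omega_of_four_roots b c d').
  - apply four_roots_of_in_Omega.
  - intros u1 u2 u3 u4 H4. pose proof H4 as (H43 & H32 & H21 & HQ). cbv zeta.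
    destruct (phi_sol_at_K u1 u2 u3 u4 H43 H32 H21) as [HK HmK].
    split; [now apply phi_sol_solution|]. split; [now apply phi_sol_bounded|].
    split; [now apply phi_sol_nonconstant|]. split; [now apply phi_sol_fundamental_period|].
    split; [now apply phi_sol_0|].
    split; [exact HK|]. split; [exact HmK|].
    split; [intros x _; now apply phi_sol_range|].
    intros psi Hs Hb Hper Hnc.
    destruct (periodic_solution_oscillates b c d psi Hs Hper)
      as (psi1 & xm & xM & H1 & H2 & H3 & Hext).
    exists (- xm). now apply (oscillation_translate b c d psi psi1 xm xM).
Qed.
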